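(* Assume no two of $\bm u_1,\dots,\bm u_m$ are parallel (i.e. the linear arrangement $\{\langle\bm u_i,\bm x\rangle=0\}$ has no repeated hyperplane). Then for $\bm a,\bm b\in\mathbb{R}^m$, the parallel translations $\mathcal{A}_{\bm a}$ and $\mathcal{A}_{\bm b}$ are normally equivalent if and only if $\operatorname{sign}(\mathcal{A}_{\bm a})=\operatorname{sign}(\mathcal{A}_{\bm b})$.
   Context: Fix nonzero $\bm u_1,\dots,\bm u_m\in\mathbb{R}^n$. For $\bm a\in\mathbb{R}^m$, $\mathcal{A}_{\bm a}$ is the indexed arrangement of hyperplanes $\langle\bm u_i,\bm x\rangle=a_i$, $i=1,\dots,m$. The sign vector of $\bm x$ is $(\operatorname{sign}(\langle\bm u_i,\bm x\rangle-a_i))_{i}$, and $\operatorname{sign}(\mathcal{A}_{\bm a})$ is the set of all such sign vectors. Faces: closures of the nonempty sets of points with a common sign vector; $\mathcal{F}(\mathcal{A})$ ordered by inclusion. For a nonempty convex polyhedron $P$: $h_P(\bm u)=\sup_{\bm x\in P}\langle\bm u,\bm x\rangle$, $N_P(\bm x)=\{\bm u:\langle\bm u,\bm x\rangle=h_P(\bm u)\}$, $N_P(G)=N_P(\bm x)$ for $\bm x\in\operatorname{relint}(G)$, $\mathcal{N}(P)$ the set of all $N_P(G)$; $P,Q$ normally equivalent iff $\mathcal{N}(P)=\mathcal{N}(Q)$. Arrangements $\mathcal{A},\mathcal{A}'$ in $\mathbb{R}^n$ are normally equivalent if there is an order-preserving bijection $\Psi:\mathcal{F}(\mathcal{A})\to\mathcal{F}(\mathcal{A}')$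 with $F,\Psi(F)$ normally equivalent for all faces $F$. *)

From HB Require Import structures.
From mathcomp Require Import all_boot all_order all_algebra.
From mathcomp Require Import all_classical all_reals.
From mathcomp Require Import all_analysis.
Set Implicit Arguments. Unset Strict Implicit. Unset Printing Implicit Defensive.
Import Order.TTheory GRing.Theory Num.Theory.
Import numFieldNormedType.Exports.
Local Open Scope classical_set_scope.
Local Open Scope ring_scope.

Section Defs.
Variables (R : realType) (n : nat).
Local Notation V := 'rV[R]_n.

Definition dot (u x : V) : R := \sum_(i < n) u ord0 i * x ord0 i.

Definition supp_fun (P : set V) (u : V) : \bar R :=
  ereal_sup [set (dot u x)%:E | x in P].

Definition normal_cone (P : set V) (x : V) : set V :=
  [set u | (dot u x)%:E = supp_fun P u].

(* nonempty faces of P: intersections of P with a supporting hyperplane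
   where the supremum is attained (u = 0 gives P itself) *)
Definition poly_face (P G : set V) : Prop :=
  G !=set0 /\ exists u : V, G = P `&` [set x | (dot u x)%:E = supp_fun P u].

Definition aff_hull (G : set V) : set V :=
  [set x | exists (k : nat) (p : 'I_k -> V) (c : 'I_k -> R),
      (forall i, G (p i)) /\ \sum_(i < k) c i = 1 /\
      x = \sum_(i < k) c i *: p i].

Definition relint (G : set V) : set V :=
  [set x | G x /\ exists e : R, 0 < e /\ (ball x e `&` aff_hull G) `<=` G].

Definition normal_cone_face (P G : set V) (N : set V) : Prop :=
  exists x, relint G x /\ N = normal_cone P x.

Definition normal_fan (P : set V) : set (set V) :=
  [set N | exists G, poly_face P G /\ normal_cone_face P G N].

Definition poly_normally_equiv (P Q : set V) : Prop :=
  normal_fan P = normal_fan Q.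

Variable m : nat.

Definition signvec (u : 'I_m -> V) (a : 'I_m -> R) (x : V) : 'rV[R]_m :=
  \row_(i < m) Num.sg (dot (u i) x - a i).

Definition arr_sign (u : 'I_m -> V) (a : 'I_m -> R) : set 'rV[R]_m :=
  range (signvec u a).

Definition arr_faces (u : 'I_m -> V) (a : 'I_m -> R) : set (set V) :=
  [set F | exists s, (exists x, signvec u a x = s) /\
                     F = closure [set x | signvec u a x = s]].

Definition arr_normally_equiv (u : 'I_m -> V) (a b : 'I_m -> R) : Prop :=
  exists Psi : set V -> set V,
    [/\ (forall F, arr_faces u a F -> arr_faces u b (Psi F)),
        (forall F G, arr_faces u a F -> arr_faces u a G -> Psi F = Psi G -> F = G),
        (forall G, arr_faces u b G -> exists2 F, arr_faces u a F & Psi F = G),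
        (forall F G, arr_faces u a F -> arr_faces u a G -> F `<=` G -> Psi F `<=` Psi G)
      & (forall F, arr_faces u a F -> poly_normally_equiv F (Psi F))].

End Defs.

From HB Require Import structures.
From mathcomp Require Import all_boot all_order all_algebra.
From mathcomp Require Import all_classical all_reals.
From mathcomp Require Import all_analysis.
From mathcomp Require Import finmap ring lra.
Import Order.TTheory GRing.Theory Num.Theory.
Import numFieldNormedType.Exports.
Local Open Scope classical_set_scope.
Local Open Scope ring_scope.
Set Implicit Arguments. Unset Strict Implicit. Unset Printing Implicit Defensive.

(* A face of A_a is the closure of a cell {x | sign x = s}, i.e. the polyhedron
   {x | sign x <= s} for the face order on sign vectors.  Its normal cone at a
   point of sign t <= s is the polar N(s, t) of the directions d such that
   sign <u_i, d> <= s_i whenever t_i = 0, so its normal fan only depends on the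
   realized sign vectors below s.  Equal sign sets thus give normally equivalent
   arrangements by matching the faces with the same sign vector.
   Conversely a normal equivalence induces a bijection psi between the sign sets
   that respects the face order and the fans; counting the faces below a sign
   vector shows that psi also reflects the order.  As no two u_i are parallel,
   N(s, s) is the line through u_i exactly when s vanishes only at i, and the
   cone of a region k at an adjacent facet on hyperplane i is the ray through
   -k_i u_i; hence psi preserves zero patterns and the signs of regions next to
   facets.  Walking along a segment that stays on one side of hyperplane j from
   any cell to such a region, psi keeps the j-th sign: psi is the identity. *)

Lemma fcard_image_inj (T U : choiceType) (X : set T) (h : T -> U) :
  finite_set X -> {in X &, injective h} -> #|` fset_set (h @` X)| = #|` fset_set X|.
Proof.
move=> finX injh; rewrite fset_set_image // card_in_imfset // => x y.
by rewrite !in_fset_set //; exact: injh.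
Qed.

Lemma fcard_le_inj (T U : choiceType) (X : set T) (Y : set U) (h : T -> U) :
  finite_set X -> finite_set Y -> {in X &, injective h} -> h @` X `<=` Y ->
  (#|` fset_set X| <= #|` fset_set Y|)%N.
Proof.
move=> finX finY injh hXY; rewrite -(fcard_image_inj finX injh).
by apply: fsubset_leq_card; rewrite -fset_set_sub //; exact: finite_image.
Qed.

Lemma inj_image_eq (T U : choiceType) (A : set T) (B : set U) (f : T -> U) (g : U -> T) :
  finite_set A -> finite_set B -> {in A &, injective f} -> f @` A `<=` B ->
  {in B &, injective g} -> g @` B `<=` A -> f @` A = B.
Proof.
move=> finA finB injf fAB injg gBA; have finfA := finite_image f finA.
apply: fset_set_inj => //; apply/eqP.
rewrite eqEfcard (fcard_image_inj finA injf) (fcard_le_inj finB finA injg gBA).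
by rewrite andbT -(fset_set_sub finfA finB).
Qed.

Section RealFacts.
Variable R : realType.
Implicit Types (p q c d l : R).

Lemma sgr_cases (x : R) :
  [\/ x < 0 /\ Num.sg x = -1, x = 0 /\ Num.sg x = 0 | 0 < x /\ Num.sg x = 1].
Proof.
case: (ltrgtP x 0) => h; first by constructor 1; rewrite ltr0_sg.
  by constructor 3; rewrite gtr0_sg.
by constructor 2; rewrite h sgr0.
Qed.

Lemma eq0_of_sgr0 (x : R) : Num.sg x = 0 -> x = 0.
Proof. by move/eqP; rewrite sgr_eq0 => /eqP. Qed.

Lemma sgr_addr_small c d : c != 0 -> `|d| < `|c| -> Num.sg (c + d) = Num.sg c.
Proof.
move=> c0 hd; have h1 := ler_norm d; have h2 : - d <= `|d| by rewrite -normrN ler_norm.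
case: (sgr_cases c) => [[cn ->]|[c0' _]|[cp ->]].
- by apply: ltr0_sg; move: hd; rewrite (ltr0_norm cn); lra.
- by move: c0; rewrite c0' eqxx.
- by apply: gtr0_sg; move: hd; rewrite (gtr0_norm cp); lra.
Qed.

Lemma sgr_convex p q l : 0 < l -> l <= 1 ->
  (Num.sg p = 0 \/ Num.sg p = Num.sg q) -> Num.sg ((1 - l) * p + l * q) = Num.sg q.
Proof.
move=> l0 l1 hp.
case: (sgr_cases q) => [[q0 sq]|[q0 sq]|[q0 sq]]; rewrite sq in hp *;
  case: (sgr_cases p) => [[p0 sp]|[p0 sp]|[p0 sp]]; rewrite sp in hp;
  try (by case: hp => h; move: h; lra).
- by apply: ltr0_sg; nra.
- by apply: ltr0_sg; rewrite p0; nra.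
- by rewrite p0 q0 !mulr0 addr0 sgr0.
- by apply: gtr0_sg; rewrite p0; nra.
- by apply: gtr0_sg; nra.
Qed.

Lemma sgr_le_mul p s : (Num.sg p = 0 \/ Num.sg p = s) ->
  0 <= s * p /\ (s * p = 0 -> p = 0).
Proof.
case=> h; first by rewrite (eq0_of_sgr0 h) mulr0.
by rewrite -h -normrEsg; split => //; move/normr0_eq0.
Qed.

Lemma exists_small_scale (I : finType) (P : pred I) (c k : I -> R) :
  (forall i, P i -> 0 < c i) -> exists2 e : R, 0 < e & forall i, P i -> e * `|k i| < c i.
Proof.
move=> hc; exists (\big[Num.min/1]_(i | P i) (c i / (`|k i| + 1))).
  by apply: lt_bigmin => // i Pi; rewrite divr_gt0 ?hc // ltr_wpDl.
move=> i Pi; have kp : 0 < `|k i| + 1 by rewrite ltr_wpDl.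
apply: (le_lt_trans (y := c i / (`|k i| + 1) * `|k i|)).
  by rewrite ler_wpM2r //; exact: bigmin_le_cond.
by rewrite mulrAC ltr_pdivrMr // ltr_pM2l ?hc // ltrDl.
Qed.

(* Consider the supremum of the points of [0, 1] where Q fails. *)
Lemma unit_interval_locally_constant (Q : R -> Prop) : Q 1 ->
  (forall l0, 0 <= l0 -> l0 <= 1 -> exists2 e : R, 0 < e &
     forall l, 0 <= l -> l <= 1 -> `|l - l0| < e -> (Q l0 <-> Q l)) ->
  Q 0.
Proof.
move=> Q1 hQ; apply: contrapT => nQ0.
set B := [set l : R | 0 <= l /\ l <= 1 /\ ~ Q l].
have hB : has_sup B by split; [exists 0 | exists 1 => l [_ []]].
have L0 : 0 <= sup B by apply: sup_upper_bound.
have L1 : sup B <= 1 by apply: ge_sup; [exists 0 | move=> l [_ []]].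
have [e e0 he] := hQ _ L0 L1.
have [QL|nQL] := pselect (Q (sup B)).
- have [b hBb hb] := sup_adherent e0 hB.
  have bL := sup_upper_bound hB hBb.
  case: hBb => b0 [b1 nQb]; apply: nQb.
  have hl : `|b - sup B| < e by rewrite ler0_norm ?subr_le0 //; lra.
  exact: (he _ b0 b1 hl).1 QL.
- have L1' : sup B < 1 by rewrite lt_def L1 andbT; apply/eqP => L1e; apply: nQL; rewrite -L1e.
  set l := Num.min (sup B + e / 2) 1.
  have l0 : 0 <= l by rewrite le_min ler01 andbT addr_ge0 // divr_ge0 // ltW.
  have l1 : l <= 1 by rewrite ge_min lexx orbT.
  have lL : sup B < l by rewrite lt_min L1' andbT ltrDl divr_gt0.
  have hl : `|l - sup B| < e.
    have : l <= sup B + e / 2 by rewrite ge_min lexx.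
    by rewrite gtr0_norm ?subr_gt0 //; lra.
  have : B l by split => //; split => // Ql; apply: nQL; exact: (he _ l0 l1 hl).2 Ql.
  by move/(sup_upper_bound hB); rewrite leNgt lL.
Qed.

End RealFacts.

Section DotProduct.
Variables (R : realType) (n : nat).
Local Notation V := 'rV[R]_n.
Implicit Types (v w x y : V).

Lemma dotC v x : dot v x = dot x v.
Proof. by apply: eq_bigr => i _; rewrite mulrC. Qed.

Lemma dotDr w x y : dot w (x + y) = dot w x + dot w y.
Proof. by rewrite /dot -big_split; apply: eq_bigr => i _; rewrite mxE mulrDr. Qed.

Lemma dotZr w x c : dot w (c *: x) = c * dot w x.
Proof. by rewrite /dot mulr_sumr; apply: eq_bigr => i _; rewrite mxE mulrCA. Qed.

Lemma dotNr w x : dot w (- x) = - dot w x.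
Proof. by rewrite -scaleN1r dotZr mulN1r. Qed.

Lemma dotBr w x y : dot w (x - y) = dot w x - dot w y.
Proof. by rewrite dotDr dotNr. Qed.

Lemma dot0r x : dot x 0 = 0.
Proof. by rewrite -(scale0r 0) dotZr mul0r. Qed.

Lemma dotDl w w' x : dot (w + w') x = dot w x + dot w' x.
Proof. by rewrite dotC dotDr !(dotC x). Qed.

Lemma dotZl w x c : dot (c *: w) x = c * dot w x.
Proof. by rewrite dotC dotZr dotC. Qed.

Lemma dotNl w x : dot (- w) x = - dot w x.
Proof. by rewrite dotC dotNr dotC. Qed.

Lemma dot_suml (I : Type) (r : seq I) (P : pred I) (F : I -> V) x :
  dot (\sum_(i <- r | P i) F i) x = \sum_(i <- r | P i) dot (F i) x.
Proof.
elim/big_rec2: _ => [|i y1 y2 _ <-]; last by rewrite dotDl.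
by rewrite dotC dot0r.
Qed.

Lemma dot_sumr (I : Type) (r : seq I) (P : pred I) (F : I -> V) x :
  dot x (\sum_(i <- r | P i) F i) = \sum_(i <- r | P i) dot x (F i).
Proof. by rewrite dotC dot_suml; apply: eq_bigr => i _; rewrite dotC. Qed.

Lemma dotxx_ge0 x : 0 <= dot x x.
Proof. by rewrite sumr_ge0 // => i _; rewrite -expr2 sqr_ge0. Qed.

Lemma dotxx_eq0 x : (dot x x == 0) = (x == 0).
Proof.
apply/idP/eqP => [|->]; last by rewrite dot0r.
rewrite psumr_eq0 => [/allP x0|i _]; last by rewrite -expr2 sqr_ge0.
apply/rowP => j; rewrite mxE; apply/eqP; rewrite -sqrf_eq0 expr2.
exact: (implyP (x0 j (mem_index_enum j))).
Qed.

Lemma dotxx_gt0 x : x != 0 -> 0 < dot x x.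
Proof. by rewrite lt_def dotxx_eq0 dotxx_ge0 andbT. Qed.

Lemma orthogonal_parallel v w : v != 0 -> (forall d, dot v d = 0 -> dot w d = 0) ->
  w = (dot w v / dot v v) *: v.
Proof.
move=> v0 vw; set k := dot w v / dot v v.
have vv0 : dot v v != 0 by rewrite dotxx_eq0.
have hd : dot v (w - k *: v) = 0 by rewrite dotBr dotZr /k (dotC v w) mulfVK // subrr.
have : dot (w - k *: v) (w - k *: v) = 0 by rewrite dotDl dotNl dotZl vw // hd mulr0 subr0.
by move/eqP; rewrite dotxx_eq0 subr_eq0 => /eqP.
Qed.

Definition norm1 w := \sum_(k < n) `|w ord0 k|.

Lemma norm1_ge0 w : 0 <= norm1 w.
Proof. exact: sumr_ge0. Qed.

Lemma dot_ball w x y e : ball x e y -> `|dot w y - dot w x| <= norm1 w * e.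
Proof.
move=> [_ xy]; rewrite -dotBr /dot /norm1 mulr_suml.
apply: le_trans (ler_norm_sum _ _ _) _; apply: ler_sum => k _.
rewrite normrM ler_wpM2l //.
by have := xy ord0 k; rewrite /ball /= !mxE => /ltW; rewrite distrC.
Qed.

End DotProduct.

Lemma normal_coneP (R : realType) (n : nat) (P : set 'rV[R]_n) x w : P x ->
  normal_cone P x w <-> forall y, P y -> dot w y <= dot w x.
Proof.
move=> Px; split => [xmax y Py|xmax].
  by rewrite -lee_fin xmax; apply: ereal_sup_ubound; exists y.
apply/eqP; rewrite eq_le; apply/andP; split; first by apply: ereal_sup_ubound; exists x.
by apply: ge_ereal_sup => _ [y Py <-]; rewrite lee_fin xmax.
Qed.

(** * Cells of an affine arrangement and their normal fans *)

Section Arrangement.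
Variables (R : realType) (n m : nat) (u : 'I_m -> 'rV[R]_n).
Local Notation V := 'rV[R]_n.
Local Notation S := 'rV[R]_m.
Implicit Types (a : 'I_m -> R) (s t : S) (x y z d w : V).

Definition hyp_val a i x := dot (u i) x - a i.

Lemma signvecE a x i : signvec u a x ord0 i = Num.sg (hyp_val a i x).
Proof. by rewrite mxE. Qed.

Lemma hyp_val_add a i x d e : hyp_val a i (x + e *: d) = hyp_val a i x + e * dot (u i) d.
Proof. by rewrite /hyp_val dotDr dotZr; ring. Qed.

Lemma hyp_val_convex a i x y l :
  hyp_val a i (x + l *: (y - x)) = (1 - l) * hyp_val a i x + l * hyp_val a i y.
Proof. by rewrite /hyp_val dotDr dotZr dotBr; ring. Qed.

Lemma dot_sub_hyp_val a i x y : dot (u i) (y - x) = hyp_val a i y - hyp_val a i x.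
Proof. by rewrite /hyp_val dotBr; ring. Qed.

Lemma hyp_val_affine a i k (p : 'I_k -> V) (c : 'I_k -> R) : \sum_(j < k) c j = 1 ->
  hyp_val a i (\sum_(j < k) c j *: p j) = \sum_(j < k) c j * hyp_val a i (p j).
Proof.
move=> c1; rewrite /hyp_val dot_sumr.
under eq_bigr do rewrite dotZr.
under [RHS]eq_bigr do rewrite mulrBr.
by rewrite sumrB -mulr_suml c1 mul1r.
Qed.

Definition sign_le t s := forall i, t ord0 i = 0 \/ t ord0 i = s ord0 i.

Lemma sign_le_refl s : sign_le s s.
Proof. by move=> i; right. Qed.

Lemma sign_le_trans t1 t2 t3 : sign_le t1 t2 -> sign_le t2 t3 -> sign_le t1 t3.
Proof. by move=> h12 h23 i; case: (h12 i) => ->; [left|exact: h23]. Qed.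

Lemma sign_le_anti t s : sign_le t s -> sign_le s t -> t = s.
Proof.
move=> ts st; apply/rowP => j.
by case: (ts j) => // tj; case: (st j) => // sj; rewrite tj sj.
Qed.

Definition cell a s := [set x | signvec u a x = s].
Definition closed_cell a s := [set x | sign_le (signvec u a x) s].

Lemma closed_cell_sign_le a s s' : sign_le s s' -> closed_cell a s `<=` closed_cell a s'.
Proof. by move=> ss' x xs; apply: sign_le_trans xs ss'. Qed.

Lemma closure_cell_sub a s : closure (cell a s) `<=` closed_cell a s.
Proof.
move=> z zcl i; apply: contrapT => /not_orP [zi0 zis].
rewrite signvecE in zi0 zis; set c := hyp_val a i z in zi0 zis.
have c0 : c != 0 by apply/eqP => c0; apply: zi0; rewrite c0 sgr0.
have cp : 0 < `|c| by rewrite normr_gt0.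
have ep : 0 < `|c| / (norm1 (u i) + 1) by rewrite divr_gt0 // ltr_wpDl // norm1_ge0.
have [y [/= ys zy]] := zcl _ (nbhsx_ballx z _ ep).
have near_c : `|hyp_val a i y - c| < `|c|.
  rewrite /c /hyp_val opprB addrA subrK; apply: le_lt_trans (dot_ball (u i) zy) _.
  rewrite mulrA ltr_pdivrMr ?ltr_wpDl ?norm1_ge0 // mulrC ltr_pM2l // ltrDl //.
apply: zis; have := sgr_addr_small c0 near_c; rewrite addrC subrK => <-.
by rewrite -signvecE ys.
Qed.

(* Points of the closed cell are reached from a point x0 of the cell along the
   segment towards x0, whose interior points all have sign vector s. *)
Lemma closed_cell_sub_closure a s x0 : signvec u a x0 = s ->
  closed_cell a s `<=` closure (cell a s).
Proof.
move=> x0s z zs B /nbhs_ballP [e /= e0 eB].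
set d := x0 - z; set l := e / (e + norm1 d + 1).
have d0 := norm1_ge0 d.
have den : 0 < e + norm1 d + 1 by rewrite ltr_wpDl // addr_ge0 // ltW.
have l0 : 0 < l by rewrite divr_gt0.
have l1 : l <= 1 by rewrite ler_pdivrMr // mul1r; lra.
exists (z + l *: d); split.
  apply/rowP => j; rewrite signvecE /d hyp_val_convex -x0s signvecE.
  by apply: sgr_convex => //; rewrite -!signvecE x0s; exact: zs.
apply: eB; split => // i j; rewrite (ord1 i) /ball /= !mxE.
rewrite opprD addrA subrr add0r normrN normrM (gtr0_norm l0).
have dj : `|x0 ord0 j - z ord0 j| <= norm1 d.
  rewrite (_ : x0 ord0 j - z ord0 j = d ord0 j); last by rewrite !mxE.
  by rewrite /norm1 (bigD1 j) //= lerDl; exact: sumr_ge0.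
apply: (le_lt_trans (y := l * norm1 d)); first by rewrite ler_wpM2l // ltW.
by rewrite /l mulrAC ltr_pdivrMr // ltr_pM2l //; lra.
Qed.

Lemma closure_cell a s : arr_sign u a s -> closure (cell a s) = closed_cell a s.
Proof.
move=> [x0 _ x0s]; apply/seteqP; split; first exact: closure_cell_sub.
exact: closed_cell_sub_closure x0s.
Qed.

Lemma closure_cell_subset a s s' : arr_sign u a s -> arr_sign u a s' ->
  closure (cell a s) `<=` closure (cell a s') <-> sign_le s s'.
Proof.
move=> as_ as'; rewrite !closure_cell //; split; last exact: closed_cell_sign_le.
have [x _ xs] := as_; move=> /(_ x); rewrite /closed_cell /= xs; apply.
exact: sign_le_refl.
Qed.

Lemma closure_cell_inj a s s' : arr_sign u a s -> arr_sign u a s' ->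
  closure (cell a s) = closure (cell a s') -> s = s'.
Proof.
move=> as_ as' ss'; apply: sign_le_anti.
  by apply/(closure_cell_subset as_ as'); rewrite ss'.
by apply/(closure_cell_subset as' as_); rewrite ss'.
Qed.

(* The directions d along which one stays in the closed cell of s when starting
   from a point with sign vector t. *)
Definition tangent_dir s t d := forall i, t ord0 i = 0 ->
  Num.sg (dot (u i) d) = 0 \/ Num.sg (dot (u i) d) = s ord0 i.

Definition sign_normal_cone s t := [set w | forall d, tangent_dir s t d -> dot w d <= 0].

Lemma normal_cone_closed_cell a s x : closed_cell a s x ->
  normal_cone (closed_cell a s) x = sign_normal_cone s (signvec u a x).
Proof.
move=> xs; apply/seteqP; split => w /=.
- move=> /(normal_coneP _ xs) xmax d xd.
  have pos i : signvec u a x ord0 i != 0 -> 0 < `|hyp_val a i x|.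
    by rewrite signvecE sgr_eq0 normr_gt0.
  have [e e0 small] := exists_small_scale (fun i => dot (u i) d) pos.
  have xeds : closed_cell a s (x + e *: d).
    move=> i; rewrite signvecE hyp_val_add.
    case: (eqVneq (signvec u a x ord0 i) 0) => xi.
      have := xd i xi; rewrite signvecE in xi.
      by rewrite (eq0_of_sgr0 xi) add0r sgrM (gtr0_sg e0) mul1r.
    have := small i xi; rewrite -{1}(gtr0_norm e0) -normrM => lt.
    have fx0 : hyp_val a i x != 0 by move: xi; rewrite signvecE sgr_eq0.
    by rewrite (sgr_addr_small fx0 lt) -signvecE; exact: xs.
  have := xmax _ xeds; rewrite dotDr dotZr => ed.
  by rewrite -(pmulr_rle0 _ e0); lra.
- move=> wneg; apply/(normal_coneP _ xs) => y ys.
  have : dot w (y - x) <= 0.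
    apply: wneg => i xi; rewrite (dot_sub_hyp_val a); rewrite signvecE in xi.
    by rewrite (eq0_of_sgr0 xi) subr0 -signvecE; exact: ys.
  by rewrite dotBr; lra.
Qed.

(* The face of the closed cell of s whose relative interior contains the points
   with sign vector t. *)
Definition face_at a s t :=
  [set y | closed_cell a s y /\ forall i, t ord0 i = 0 -> hyp_val a i y = 0].

Lemma face_at_poly_face a s x : closed_cell a s x ->
  poly_face (closed_cell a s) (face_at a s (signvec u a x)).
Proof.
move=> xs; set t := signvec u a x.
set w := \sum_(i | t ord0 i == 0) (- s ord0 i) *: u i.
have x0 i : t ord0 i = 0 -> hyp_val a i x = 0 by rewrite signvecE => /eq0_of_sgr0.
have wE y : dot w y - dot w x = - \sum_(i | t ord0 i == 0) s ord0 i * hyp_val a i y.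
  rewrite /w !dot_suml -sumrB -sumrN; apply: eq_bigr => i /eqP ti.
  by have := x0 i ti; rewrite /hyp_val !dotZl => /eqP; rewrite subr_eq0 => /eqP ->; ring.
have sf y : closed_cell a s y -> forall i,
    0 <= s ord0 i * hyp_val a i y /\ (s ord0 i * hyp_val a i y = 0 -> hyp_val a i y = 0).
  by move=> ys i; apply: sgr_le_mul; rewrite -signvecE; exact: ys.
have sum_ge0 y : closed_cell a s y -> 0 <= \sum_(i | t ord0 i == 0) s ord0 i * hyp_val a i y.
  by move=> ys; apply: sumr_ge0 => i _; case: (sf y ys i).
split; first by exists x; split.
exists w; apply/seteqP; split => y.
- move=> [ys y0]; split => //=; apply/(normal_coneP _ ys) => y' y's.
  have sy0 : \sum_(i | t ord0 i == 0) s ord0 i * hyp_val a i y = 0.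
    by rewrite big1 // => i /eqP /y0 ->; rewrite mulr0.
  by have := wE y; have := wE y'; have := sum_ge0 _ y's; lra.
- move=> [ys /= /(normal_coneP _ ys) /(_ _ xs) xy]; split => // i ti.
  have := wE y; have := sum_ge0 _ ys => s_ge0 wy.
  have /eqP : \sum_(i | t ord0 i == 0) s ord0 i * hyp_val a i y = 0 by lra.
  rewrite psumr_eq0 => [/allP /(_ i (mem_index_enum i))|j _]; last by case: (sf y ys j).
  by rewrite ti eqxx /= => /eqP; case: (sf y ys i) => _ /[apply].
Qed.

Lemma face_at_relint a s x : closed_cell a s x -> relint (face_at a s (signvec u a x)) x.
Proof.
move=> xs; set t := signvec u a x.
have pos i : t ord0 i != 0 -> 0 < `|hyp_val a i x| by rewrite signvecE sgr_eq0 normr_gt0.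
have [e e0 small] := exists_small_scale (fun i => norm1 (u i)) pos.
split; first by split => // i; rewrite signvecE => /eq0_of_sgr0.
exists e; split => // z0 [xz [k [p [c [pF [c1 z0E]]]]]]; subst z0.
set z := \sum_(j < k) c j *: p j in xz *.
have z0 i : t ord0 i = 0 -> hyp_val a i z = 0.
  move=> ti; rewrite hyp_val_affine // big1 // => j _.
  by case: (pF j) => _ /(_ i ti) ->; rewrite mulr0.
have zt i : t ord0 i != 0 -> signvec u a z ord0 i = t ord0 i.
  move=> ti; have fx0 : hyp_val a i x != 0 by move: ti; rewrite signvecE sgr_eq0.
  have near_x : `|hyp_val a i z - hyp_val a i x| < `|hyp_val a i x|.
    rewrite /hyp_val opprB addrA subrK; apply: le_lt_trans (dot_ball (u i) xz) _.
    by have := small i ti; rewrite /= ger0_norm ?norm1_ge0 // mulrC.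
  by rewrite !signvecE -(sgr_addr_small fx0 near_x) addrC subrK.
split => // i; case: (eqVneq (t ord0 i) 0) => ti; last by rewrite zt //; exact: xs.
by left; rewrite signvecE z0 // sgr0.
Qed.

Definition sign_fan (A : set S) s :=
  [set sign_normal_cone s t | t in [set t | A t /\ sign_le t s]].

Lemma normal_fan_closed_cell a s : normal_fan (closed_cell a s) = sign_fan (arr_sign u a) s.
Proof.
apply/seteqP; split => N.
- move=> [G [[_ [w ->]] [x [[[xs _] _] ->]]]].
  exists (signvec u a x); first by split => //; exists x.
  by rewrite (normal_cone_closed_cell xs).
- move=> [_ [[x _ <-] xs] <-]; exists (face_at a s (signvec u a x)); split.
    exact: face_at_poly_face.
  by exists x; split; [exact: face_at_relint|rewrite normal_cone_closed_cell].
Qed.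

Definition face_sign a F := xget 0 [set s | arr_sign u a s /\ F = closure (cell a s)].

Lemma face_signP a F : arr_faces u a F ->
  arr_sign u a (face_sign a F) /\ F = closure (cell a (face_sign a F)).
Proof.
move=> [s [[x xs] ->]]; apply: (@xgetPex _ 0 [set s | arr_sign u a s /\ _]).
by exists s; split => //; exists x.
Qed.

Lemma arr_faces_cell a s : arr_sign u a s -> arr_faces u a (closure (cell a s)).
Proof. by move=> [x _ xs]; exists s; split => //; exists x. Qed.

Lemma face_sign_cell a s : arr_sign u a s -> face_sign a (closure (cell a s)) = s.
Proof.
move=> as_; have [af sE] := face_signP (arr_faces_cell as_).
exact: closure_cell_inj af as_ (esym sE).
Qed.

Lemma arr_normally_equiv_of_sign a b : arr_sign u a = arr_sign u b -> arr_normally_equiv u a b.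
Proof.
move=> ab; exists (fun F => closure (cell b (face_sign a F))); split.
- by move=> F /face_signP [+ _]; rewrite ab => /arr_faces_cell.
- move=> F G /face_signP [aF FE] /face_signP [aG GE]; rewrite ab in aF aG.
  by move=> /(closure_cell_inj aF aG) FG; rewrite FE GE FG.
- move=> G /face_signP [bG GE]; rewrite -ab in bG.
  exists (closure (cell a (face_sign b G))); first exact: arr_faces_cell.
  by rewrite face_sign_cell.
- move=> F G /face_signP [aF FE] /face_signP [aG GE].
  rewrite {1}FE {1}GE => /(closure_cell_subset aF aG); rewrite ab in aF aG.
  by move/(closure_cell_subset aF aG).
- move=> F /face_signP [aF FE]; have bF := aF; rewrite ab in bF.
  rewrite /poly_normally_equiv {1}FE !closure_cell //.
  by rewrite !normal_fan_closed_cell ab.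
Qed.

End Arrangement.

(** * Rigidity of the face poset together with the normal fans *)

Section Converse.
Variables (R : realType) (n m : nat) (u : 'I_m -> 'rV[R]_n).
Hypothesis u_nz : forall i, u i != 0.
Hypothesis u_nonpar : forall i j : 'I_m, i != j -> ~ (exists c : R, u i = c *: u j).
Local Notation V := 'rV[R]_n.
Local Notation S := 'rV[R]_m.
Implicit Types (a c : 'I_m -> R) (s t g k : S) (x y z d w : V).

Lemma dot_uu_gt0 i : 0 < dot (u i) (u i).
Proof. exact: dotxx_gt0. Qed.

Lemma u_scale_neq i j e : i != j -> u i <> e *: u j.
Proof. by move=> ij uij; apply: (u_nonpar ij); exists e. Qed.

Definition unit_sign (v : R) := v = 1 \/ v = -1.

Lemma unit_sign_sqr v : unit_sign v -> v * v = 1.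
Proof. by case=> ->; rewrite ?mulr1 ?mulrNN ?mulr1. Qed.

Lemma unit_sign_sg v : unit_sign v -> Num.sg v = v.
Proof. by case=> ->; rewrite ?sgr1 ?sgrN ?sgr1. Qed.

Lemma unit_sign_neq0 v : unit_sign v -> v != 0.
Proof. by case=> ->; rewrite ?oppr_eq0 oner_eq0. Qed.

Lemma arr_sign_unit c s j : arr_sign u c s -> s ord0 j != 0 -> unit_sign (s ord0 j).
Proof.
move=> [x _ <-]; rewrite signvecE.
by case: (sgr_cases (hyp_val u c j x)) => [[_ ->]|[_ ->]|[_ ->]]; [right|rewrite eqxx|left].
Qed.

Definition zero_exactly_at s i := forall j, (s ord0 j == 0) = (j == i).

Lemma zero_exactly_at_eq0 s i : zero_exactly_at s i -> s ord0 i = 0.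
Proof. by move=> si; apply/eqP; rewrite si. Qed.

Definition line (v : V) := [set e *: v | e in [set: R]].
Definition ray (v : V) := [set e *: v | e in [set e : R | 0 <= e]].

Lemma sign_normal_cone_facet s i :
  zero_exactly_at s i -> sign_normal_cone u s s = line (u i).
Proof.
move=> si; apply/seteqP; split => w /=.
- move=> wneg; exists (dot w (u i) / dot (u i) (u i)) => //.
  apply/esym/orthogonal_parallel => // d ud.
  have sd e : tangent_dir u s s (e *: d).
    by move=> j /eqP; rewrite si => /eqP ->; left; rewrite dotZr ud mulr0 sgr0.
  by have := wneg _ (sd 1); have := wneg _ (sd (-1)); rewrite !dotZr; lra.
- move=> [e _ <-] d sd; rewrite dotZl.
  have si0 := zero_exactly_at_eq0 si.
  by have := sd i si0; rewrite si0; case=> /eq0_of_sgr0 ->; rewrite mulr0.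
Qed.

Lemma sign_normal_cone_u s t j : sign_le t s -> s ord0 j = 0 -> sign_normal_cone u s t (u j).
Proof.
move=> ts sj d td; have tj : t ord0 j = 0 by case: (ts j) => ->.
by have := td j tj; rewrite sj; case=> /eq0_of_sgr0 ->.
Qed.

Lemma sign_normal_cone_signed_u s t j : t ord0 j = 0 ->
  sign_normal_cone u s t ((- s ord0 j) *: u j).
Proof.
move=> tj d td; rewrite dotZl mulNr oppr_le0.
by have [] := sgr_le_mul (td j tj).
Qed.

(* Distinct hyperplanes have non-parallel normals, so a normal cone that is a
   line through u i only sees the hyperplane i. *)
Lemma zero_exactly_at_of_line c s t i : arr_sign u c s -> sign_le t s ->
  sign_normal_cone u s t = line (u i) -> zero_exactly_at s i.
Proof.
move=> cs ts Nst.
have s0i j : s ord0 j = 0 -> j = i.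
  move=> sj; have := sign_normal_cone_u ts sj; rewrite Nst => -[e _ uj].
  by apply/eqP; apply: contraT => ji; case: (u_scale_neq ji (esym uj)).
have t0i j : t ord0 j = 0 -> s ord0 j != 0 -> j = i.
  move=> tj sj; have := sign_normal_cone_signed_u (s := s) tj; rewrite Nst => -[e _ uj].
  have sj1 := arr_sign_unit cs sj.
  apply/eqP; apply: contraT => ji; exfalso; apply: (u_scale_neq (e := - s ord0 j * e) ji).
  by rewrite -scalerA uj scalerA mulrN mulNr opprK unit_sign_sqr // scale1r.
have si : s ord0 i = 0.
  apply: contraTeq isT => si; have si1 := arr_sign_unit cs si.
  have snz j : s ord0 j != 0.
    by apply/eqP => sj0; move: si; rewrite -(s0i j sj0) sj0 eqxx.
  have sd : tangent_dir u s t (s ord0 i *: u i).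
    move=> j /t0i /(_ (snz j)) ->; right.
    by rewrite dotZr sgrM unit_sign_sg // gtr0_sg ?mulr1 // dot_uu_gt0.
  have pos : sign_normal_cone u s t (u i) by rewrite Nst; exists 1 => //; rewrite scale1r.
  have neg : sign_normal_cone u s t (- u i) by rewrite Nst; exists (-1) => //; rewrite scaleN1r.
  have := pos _ sd; have := neg _ sd; rewrite dotNl !dotZr => h1 h2.
  have : s ord0 i * dot (u i) (u i) = 0 by lra.
  move/eqP; rewrite mulf_eq0 (negbTE si) /=.
  by rewrite (gt_eqF (dot_uu_gt0 i)).
move=> j; apply/eqP/eqP => [/s0i //|->]; exact: si.
Qed.

Lemma sign_normal_cone_region_facet c k g i : arr_sign u c k -> (forall j, k ord0 j != 0) ->
  zero_exactly_at g i -> sign_le g k -> sign_normal_cone u k g = ray ((- k ord0 i) *: u i).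
Proof.
move=> ck knz gi gk; have ki := arr_sign_unit ck (knz i).
have g0i j : g ord0 j = 0 -> j = i by move/eqP; rewrite gi => /eqP.
have gi0 := zero_exactly_at_eq0 gi.
apply/seteqP; split => w /=.
- move=> wneg; have wpar : w = (dot w (u i) / dot (u i) (u i)) *: u i.
    apply: orthogonal_parallel => // d ud.
    have gd e : tangent_dir u k g (e *: d).
      by move=> j /g0i ->; left; rewrite dotZr ud mulr0 sgr0.
    by have := wneg _ (gd 1); have := wneg _ (gd (-1)); rewrite !dotZr; lra.
  set q := dot w (u i) / dot (u i) (u i) in wpar.
  have gd : tangent_dir u k g (k ord0 i *: u i).
    move=> j /g0i ->; right.
    by rewrite dotZr sgrM unit_sign_sg // gtr0_sg ?mulr1 // dot_uu_gt0.
  have := wneg _ gd; rewrite wpar dotZl dotZr mulrA => qk.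
  exists (- q * k ord0 i) => /=.
    by rewrite mulNr oppr_ge0 -(pmulr_rle0 _ (dot_uu_gt0 i)) mulrC.
  by rewrite scalerA; congr (_ *: _); rewrite -[RHS]mulr1 -(unit_sign_sqr ki); ring.
- move=> [q /= q0 <-] d gd; rewrite !dotZl mulNr mulrN oppr_le0; apply: mulr_ge0 => //.
  by have [] := sgr_le_mul (gd i gi0).
Qed.

Lemma region_sign_of_ray c k t v i : arr_sign u c k -> (forall j, k ord0 j != 0) ->
  sign_le t k -> unit_sign v -> sign_normal_cone u k t = ray ((- v) *: u i) -> k ord0 i = v.
Proof.
move=> ck knz tk v1 Nkt.
have [j tj] : exists j, t ord0 j = 0.
  apply: contrapT => tnz.
  have td : tangent_dir u k t ((- v) *: u i) by move=> j tj; case: tnz; exists j.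
  have : sign_normal_cone u k t ((- v) *: u i) by rewrite Nkt; exists 1; rewrite /= ?ler01 ?scale1r.
  move=> /(_ _ td); rewrite dotZl dotZr mulrA mulrNN unit_sign_sqr // mul1r.
  by rewrite leNgt dot_uu_gt0.
have := sign_normal_cone_signed_u (s := k) tj; rewrite Nkt => -[q /= q0 uj].
have kj := arr_sign_unit ck (knz j).
have ji : j = i.
  apply/eqP; apply: contraT => ji; exfalso; apply: (u_scale_neq (e := - k ord0 j * (q * - v)) ji).
  by rewrite -scalerA -scalerA uj scalerA mulrNN unit_sign_sqr // scale1r.
subst j; have : (k ord0 i - q * v) *: u i = 0.
  have : (- k ord0 i) *: u i = (q * - v) *: u i by rewrite -uj scalerA.
  rewrite scalerBl !scaleNr mulrN scaleNr => /oppr_inj ->.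
  exact: subrr.
move/eqP; rewrite scaler_eq0 (negbTE (u_nz i)) orbF subr_eq0 => /eqP kq.
by case: v1 kq kj => -> kq; rewrite kq; case => e //; move: e; rewrite ?mulr1 ?mulrN1; lra.
Qed.

Lemma sign_normal_cone_zeros c s t1 t2 : arr_sign u c t1 -> arr_sign u c t2 ->
  sign_le t1 s -> sign_le t2 s -> sign_normal_cone u s t1 = sign_normal_cone u s t2 ->
  forall j, t1 ord0 j = 0 -> t2 ord0 j = 0.
Proof.
move=> [y _ yt1] [x _ xt2] t1s t2s Nt12 j t1j; apply: contraTeq isT => t2j.
have t2s_j : t2 ord0 j = s ord0 j by case: (t2s j) => // t2j0; move: t2j; rewrite t2j0 eqxx.
have zero_at z i : signvec u c z ord0 i = 0 -> hyp_val u c i z = 0.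
  by rewrite signvecE => /eq0_of_sgr0.
have td : tangent_dir u s t2 (y - x).
  move=> i t2i; rewrite (dot_sub_hyp_val u c) (zero_at x) ?xt2 // subr0 -signvecE yt1.
  exact: t1s.
have := sign_normal_cone_signed_u (s := s) t1j; rewrite Nt12 => /(_ _ td).
rewrite dotZl (dot_sub_hyp_val u c) (zero_at y) ?yt1 // sub0r mulrNN -t2s_j -xt2.
rewrite signvecE -normrEsg leNgt normr_gt0 -sgr_eq0 -signvecE xt2.
by rewrite t2j.
Qed.

Lemma sign_normal_cone_inj c s t1 t2 : arr_sign u c t1 -> arr_sign u c t2 ->
  sign_le t1 s -> sign_le t2 s -> sign_normal_cone u s t1 = sign_normal_cone u s t2 -> t1 = t2.
Proof.
move=> ct1 ct2 t1s t2s Nt12; apply/rowP => j.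
have := sign_normal_cone_zeros ct1 ct2 t1s t2s Nt12 (j := j).
have := sign_normal_cone_zeros ct2 ct1 t2s t1s (esym Nt12) (j := j).
case: (t1s j) (t2s j) => [-> | ->] [-> | ->] //; last by move=> h; rewrite h.
by move=> + h; rewrite h.
Qed.

Lemma exists_generic_dir i (r : seq 'I_m) : exists w : V,
  dot (u i) w = 0 /\ forall j, j \in r -> j != i -> dot (u j) w != 0.
Proof.
elim: r => [|j r [w [iw rw]]]; first by exists 0; split => //; rewrite dot0r.
have [->|ji] := eqVneq j i.
  by exists w; split => // l; rewrite inE => /orP [/eqP ->|lr]; [rewrite eqxx|exact: rw].
have [jw|jw] := eqVneq (dot (u j) w) 0; last first.
  by exists w; split => // l; rewrite inE => /orP [/eqP ->|lr] //; exact: rw.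
(* Move w off the hyperplane j, staying in the hyperplane i, along the component
   of u j orthogonal to u i; it is nonzero since u i, u j are not parallel. *)
set k := dot (u j) (u i) / dot (u i) (u i); set p := u j - k *: u i.
have ip : dot (u i) p = 0.
  by rewrite /p dotBr dotZr (dotC (u i) (u j)) /k mulfVK ?subrr // gt_eqF ?dot_uu_gt0.
have p0 : p != 0.
  by apply/eqP => /eqP; rewrite subr_eq0 => /eqP uj; exact: u_scale_neq ji uj.
have jp : dot (u j) p = dot p p.
  by rewrite -{1}(subrK (k *: u i) (u j)) -/p dotDl dotZl ip mulr0 addr0.
have pos l : (l \in r) && (l != i) -> 0 < `|dot (u l) w|.
  by case/andP => lr li; rewrite normr_gt0 rw.
have [e e0 small] := exists_small_scale (fun l => dot (u l) p) pos.
exists (w + e *: p); split; first by rewrite dotDr dotZr iw ip mulr0 addr0.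
move=> l; rewrite inE dotDr dotZr => /orP [/eqP -> _|lr li].
  rewrite jw add0r; apply: mulf_neq0; first by rewrite gt_eqF.
  by rewrite jp dotxx_eq0.
rewrite -sgr_eq0 sgr_addr_small ?sgr_eq0 ?rw //.
by rewrite normrM gtr0_norm //; apply: small; rewrite lr li.
Qed.

(* Pushing a point of the face with sign s slightly in a generic direction inside
   the hyperplane i yields a facet of the arrangement lying above s. *)
Lemma exists_facet_above c s i : arr_sign u c s -> s ord0 i = 0 ->
  exists t, [/\ arr_sign u c t, sign_le s t & zero_exactly_at t i].
Proof.
move=> [x _ xs] si; have [w [iw jw]] := exists_generic_dir i (enum 'I_m).
have pos j : s ord0 j != 0 -> 0 < `|hyp_val u c j x|.
  by rewrite -xs signvecE sgr_eq0 normr_gt0.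
have [e e0 small] := exists_small_scale (fun j => dot (u j) w) pos.
have xewE j : signvec u c (x + e *: w) ord0 j =
    if s ord0 j == 0 then Num.sg (e * dot (u j) w) else s ord0 j.
  rewrite signvecE hyp_val_add; case: (eqVneq (s ord0 j) 0) => sj.
    by rewrite -xs signvecE in sj; rewrite (eq0_of_sgr0 sj) add0r.
  have xj0 : hyp_val u c j x != 0 by rewrite -sgr_eq0 -signvecE xs.
  rewrite sgr_addr_small // -?signvecE ?xs //.
  by rewrite normrM gtr0_norm //; apply: small.
exists (signvec u c (x + e *: w)); split; first by exists (x + e *: w).
  by move=> j; rewrite xewE; case: ifP => [/eqP ->|_]; [left|right].
move=> j; rewrite xewE; have [->|ji] := eqVneq j i.
  by rewrite si eqxx iw mulr0 sgr0 eqxx.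
case: ifP => [_|/negbT //]; rewrite sgr_eq0 mulf_eq0 gt_eqF //=.
by apply/negbTE/jw; rewrite ?mem_enum.
Qed.

Lemma exists_region_beside_facet c g i v : arr_sign u c g -> zero_exactly_at g i ->
  unit_sign v -> exists k, [/\ arr_sign u c k, sign_le g k,
                              forall j, k ord0 j != 0 & k ord0 i = v].
Proof.
move=> [y _ yg] gi v1.
have pos j : j != i -> 0 < `|hyp_val u c j y|.
  by move=> ji; rewrite normr_gt0 -sgr_eq0 -signvecE yg gi.
have [e e0 small] := exists_small_scale (fun j => dot (u j) (v *: u i)) pos.
set z := y + e *: (v *: u i).
have zj j : j != i -> signvec u c z ord0 j = g ord0 j.
  move=> ji; rewrite signvecE hyp_val_add sgr_addr_small -?signvecE ?yg //.
    by rewrite -sgr_eq0 -signvecE yg gi.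
  by rewrite normrM gtr0_norm //; apply: small.
have zi : signvec u c z ord0 i = v.
  have yi : hyp_val u c i y = 0.
    by apply: eq0_of_sgr0; rewrite -signvecE yg; exact: zero_exactly_at_eq0.
  rewrite signvecE hyp_val_add yi add0r dotZr !sgrM (gtr0_sg e0) (gtr0_sg (dot_uu_gt0 i)).
  by rewrite unit_sign_sg // mul1r mulr1.
exists (signvec u c z); split => [|j|j|//]; first by exists z.
- by have [->|ji] := eqVneq j i; [left; exact: zero_exactly_at_eq0|right; rewrite zj].
- by have [->|ji] := eqVneq j i; [rewrite zi unit_sign_neq0|rewrite zj // gi].
Qed.

Lemma exists_on_hyperplane c i : exists x, hyp_val u c i x = 0.
Proof.
exists ((c i / dot (u i) (u i)) *: u i).
by rewrite /hyp_val dotZr mulfVK ?subrr // gt_eqF ?dot_uu_gt0.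
Qed.

Lemma finite_arr_sign c : finite_set (arr_sign u c).
Proof.
pose decode (k : 'rV['I_3]_m) : S := \row_j ((k ord0 j : nat)%:R - 1).
apply: sub_finite_set (finite_image decode (finite_finset (X := setT))).
move=> _ [x _ <-].
pose code j : nat := if hyp_val u c j x < 0 then 0 else if hyp_val u c j x == 0 then 1 else 2.
exists (\row_j inord (code j)) => //; apply/rowP => j.
rewrite signvecE !mxE inordK; last first.
  by rewrite /code; case: ifP => // _; case: ifP.
rewrite /code; case: (sgr_cases (hyp_val u c j x)) => [[-> ->]|[-> ->]|[gt0 ->]].
- by rewrite sub0r.
- by rewrite ltxx eqxx subrr.
- by rewrite ltNge ltW // gt_eqF //=; lra.
Qed.

Lemma sign_le_nearby c z d : exists2 e : R, 0 < e &
  forall h, `|h| < e -> sign_le (signvec u c z) (signvec u c (z + h *: d)).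
Proof.
have pos j : signvec u c z ord0 j != 0 -> 0 < `|hyp_val u c j z|.
  by rewrite signvecE sgr_eq0 normr_gt0.
have [e e0 small] := exists_small_scale (fun j => dot (u j) d) pos.
exists e => // h he j; have [zj|zj] := eqVneq (signvec u c z ord0 j) 0; first by left.
right; have zj0 : hyp_val u c j z != 0 by rewrite -sgr_eq0 -signvecE.
have lt : `|h * dot (u j) d| < `|hyp_val u c j z|.
  rewrite normrM; apply: le_lt_trans (small j zj).
  by rewrite ler_wpM2r // ltW.
by rewrite !signvecE hyp_val_add (sgr_addr_small zj0 lt).
Qed.

(* Along the segment from x to y the sign at hyperplane i stays constant and
   nonzero, so the sign vectors met along it are linked by such comparisons. *)
Lemma sign_transfer_segment c x y i (Q : S -> Prop) :
  Num.sg (hyp_val u c i x) = Num.sg (hyp_val u c i y) -> hyp_val u c i y != 0 ->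
  (forall t1 t2, arr_sign u c t1 -> arr_sign u c t2 -> sign_le t1 t2 -> t1 ord0 i != 0 ->
     (Q t1 <-> Q t2)) ->
  Q (signvec u c y) -> Q (signvec u c x).
Proof.
move=> xy y0 Qinv Qy; pose z l := x + l *: (y - x).
have z0 : z 0 = x by rewrite /z scale0r addr0.
have z1 : z 1 = y by rewrite /z scale1r addrC subrK.
have zi l : 0 <= l -> l <= 1 -> signvec u c (z l) ord0 i != 0.
  move=> l0 l1; rewrite signvecE; have [->|ln0] := eqVneq l 0; first by rewrite z0 xy sgr_eq0.
  rewrite hyp_val_convex sgr_convex ?sgr_eq0 //; last by right.
  by rewrite lt_def ln0.
rewrite -z0; apply: (unit_interval_locally_constant (Q := Q \o signvec u c \o z));
  first by rewrite /= z1.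
move=> l0 l00 l01; have [e e0 near] := sign_le_nearby c (z l0) (y - x).
exists e => // l l0' l1' le; apply: Qinv; try by eexists.
- have -> : z l = z l0 + (l - l0) *: (y - x).
    by rewrite /z -addrA -scalerDl addrCA subrr addr0.
  exact: near.
- exact: zi.
Qed.

(* psi stands for the bijection between the sign sets that is induced by a
   normal equivalence of the two arrangements. *)
Section Rigidity.
Variables (a b : 'I_m -> R) (psi : S -> S).
Hypothesis psi_sign : forall s, arr_sign u a s -> arr_sign u b (psi s).
Hypothesis psi_mono : forall s1 s2, arr_sign u a s1 -> arr_sign u a s2 ->
  sign_le s1 s2 -> sign_le (psi s1) (psi s2).
Hypothesis psi_inj : forall s1 s2, arr_sign u a s1 -> arr_sign u a s2 -> psi s1 = psi s2 -> s1 = s2.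
Hypothesis psi_surj : forall t, arr_sign u b t -> exists2 s, arr_sign u a s & psi s = t.
Hypothesis psi_fan : forall s, arr_sign u a s ->
  sign_fan u (arr_sign u a) s = sign_fan u (arr_sign u b) (psi s).

(* psi maps the faces of the closed cell of s2 injectively into those of the
   closed cell of psi s2, and equality of the fans gives an injection back:
   by finiteness psi is onto, so psi s1 is the image of a face of s2. *)
Lemma psi_mono_rev s1 s2 : arr_sign u a s1 -> arr_sign u a s2 ->
  sign_le (psi s1) (psi s2) -> sign_le s1 s2.
Proof.
move=> as1 as2 le12.
pose A := [set t | arr_sign u a t /\ sign_le t s2].
pose B := [set t | arr_sign u b t /\ sign_le t (psi s2)].
pose back t := xget 0 [set t' | A t' /\ sign_normal_cone u s2 t' = sign_normal_cone u (psi s2) t].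
have backP t : B t ->
    A (back t) /\ sign_normal_cone u s2 (back t) = sign_normal_cone u (psi s2) t.
  move=> Bt; apply: (@xgetPex _ 0 [set t' | A t' /\ _]).
  have : sign_fan u (arr_sign u b) (psi s2) (sign_normal_cone u (psi s2) t) by exists t.
  by rewrite -psi_fan // => -[t' At' Nt']; exists t'.
have psiAB : psi @` A = B.
  apply: (inj_image_eq (g := back)).
  - by apply: sub_finite_set (finite_arr_sign a) => t [].
  - by apply: sub_finite_set (finite_arr_sign b) => t [].
  - by move=> t1 t2 /set_mem [at1 _] /set_mem [at2 _]; exact: psi_inj.
  - by move=> _ [t [a_t ts2] <-]; split; [exact: psi_sign|exact: psi_mono].
  - move=> t1 t2 /set_mem Bt1 /set_mem Bt2 e.
    have [[bt1 t1s] [bt2 t2s]] := (Bt1, Bt2).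
    apply: sign_normal_cone_inj bt1 bt2 t1s t2s _.
    by rewrite -(backP _ Bt1).2 -(backP _ Bt2).2 e.
  - by move=> _ [t Bt <-]; exact: (backP t Bt).1.
have : B (psi s1) by split; [exact: psi_sign|].
by rewrite -psiAB => -[t [a_t ts2] pt]; rewrite -(psi_inj a_t as1 pt).
Qed.

Lemma psi_facet s i : arr_sign u a s -> zero_exactly_at s i -> zero_exactly_at (psi s) i.
Proof.
move=> as_ si; have : sign_fan u (arr_sign u b) (psi s) (line (u i)).
  rewrite -psi_fan // -(sign_normal_cone_facet si).
  by exists s => //; split => //; exact: sign_le_refl.
by move=> [t [bt tps] Nt]; exact: zero_exactly_at_of_line (psi_sign as_) tps Nt.
Qed.

Lemma psi_facet_rev s i : arr_sign u a s -> zero_exactly_at (psi s) i -> zero_exactly_at s i.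
Proof.
move=> as_ psi_i; have : sign_fan u (arr_sign u a) s (line (u i)).
  rewrite psi_fan // -(sign_normal_cone_facet psi_i).
  by exists (psi s) => //; split; [exact: psi_sign|exact: sign_le_refl].
by move=> [t [a_t ts] Nt]; exact: zero_exactly_at_of_line as_ ts Nt.
Qed.

Lemma psi_zero s i : arr_sign u a s -> s ord0 i = 0 -> psi s ord0 i = 0.
Proof.
move=> as_ si; have [t [a_t st ti]] := exists_facet_above as_ si.
have := zero_exactly_at_eq0 (psi_facet a_t ti).
by case: (psi_mono as_ a_t st i) => // ->.
Qed.

Lemma psi_zero_rev s i : arr_sign u a s -> psi s ord0 i = 0 -> s ord0 i = 0.
Proof.
move=> as_ psi_i; have [t [bt pst ti]] := exists_facet_above (psi_sign as_) psi_i.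
have [s' as' s't] := psi_surj bt; rewrite -s't in pst ti.
have := zero_exactly_at_eq0 (psi_facet_rev as' ti).
by case: (psi_mono_rev as_ as' pst i) => // ->.
Qed.

Lemma psi_region_facet k g i : arr_sign u a k -> (forall j, k ord0 j != 0) ->
  arr_sign u a g -> zero_exactly_at g i -> sign_le g k -> psi k ord0 i = k ord0 i.
Proof.
move=> ak knz ag gi gk.
have pknz j : psi k ord0 j != 0 by apply: contra (knz j) => /eqP /(psi_zero_rev ak) ->.
have : sign_fan u (arr_sign u b) (psi k) (ray ((- k ord0 i) *: u i)).
  rewrite -psi_fan // -(sign_normal_cone_region_facet ak knz gi gk).
  by exists g.
move=> [t [bt tk] Nt].
exact: region_sign_of_ray (psi_sign ak) pknz tk (arr_sign_unit ak (knz i)) Nt.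
Qed.

Lemma psi_id s : arr_sign u a s -> psi s = s.
Proof.
move=> as_; apply/rowP => j; have [sj|sj] := eqVneq (s ord0 j) 0.
  by rewrite sj psi_zero.
have [p pj] := exists_on_hyperplane a j.
have p0 : signvec u a p ord0 j = 0 by rewrite signvecE pj sgr0.
have [g [ag _ gj]] := exists_facet_above (imageT (signvec u a) p) p0.
have [k [ak gk knz kj]] := exists_region_beside_facet ag gj (arr_sign_unit as_ sj).
have [x _ xs] := as_; have [y _ yk] := ak.
have := @sign_transfer_segment a x y j (fun t => psi t ord0 j = s ord0 j).
rewrite xs yk; apply => //.
- by rewrite -!signvecE xs yk kj.
- by rewrite -sgr_eq0 -signvecE yk.
- move=> t1 t2 at1 at2 t12 t1j.
  have p1 : psi t1 ord0 j != 0 by apply: contra t1j => /eqP /(psi_zero_rev at1) ->.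
  by case: (psi_mono at1 at2 t12 j) => [/eqP|->]; [rewrite (negbTE p1)|].
- by rewrite -kj (psi_region_facet ak knz ag gj gk).
Qed.

End Rigidity.

Lemma sign_of_arr_normally_equiv a b : arr_normally_equiv u a b -> arr_sign u a = arr_sign u b.
Proof.
move=> [Psi [Psi_faces Psi_inj Psi_surj Psi_mono Psi_fan]].
pose psi s := face_sign u b (Psi (closure (cell u a s))).
have psiP s : arr_sign u a s ->
    arr_sign u b (psi s) /\ Psi (closure (cell u a s)) = closure (cell u b (psi s)).
  by move=> as_; apply/face_signP/Psi_faces/arr_faces_cell.
have psi_sign s : arr_sign u a s -> arr_sign u b (psi s) by case/psiP.
have psi_mono s1 s2 : arr_sign u a s1 -> arr_sign u a s2 ->
    sign_le s1 s2 -> sign_le (psi s1) (psi s2).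
  move=> as1 as2 /(closure_cell_subset as1 as2) s12.
  have [[bs1 E1] [bs2 E2]] := (psiP _ as1, psiP _ as2).
  apply/(closure_cell_subset bs1 bs2); rewrite -E1 -E2.
  exact: Psi_mono (arr_faces_cell as1) (arr_faces_cell as2) s12.
have psi_inj s1 s2 : arr_sign u a s1 -> arr_sign u a s2 -> psi s1 = psi s2 -> s1 = s2.
  move=> as1 as2 e; apply: (closure_cell_inj as1 as2).
  apply: Psi_inj (arr_faces_cell as1) (arr_faces_cell as2) _.
  by rewrite (psiP _ as1).2 (psiP _ as2).2 e.
have psi_surj t : arr_sign u b t -> exists2 s, arr_sign u a s & psi s = t.
  move=> bt; have [F aF FE] := Psi_surj _ (arr_faces_cell bt).
  have [as_ sE] := face_signP aF; exists (face_sign u a F) => //.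
  by apply: (closure_cell_inj (psi_sign _ as_) bt); rewrite -(psiP _ as_).2 -sE FE.
have psi_fan s : arr_sign u a s -> sign_fan u (arr_sign u a) s = sign_fan u (arr_sign u b) (psi s).
  move=> as_; have [bs E] := psiP _ as_; have := Psi_fan _ (arr_faces_cell as_).
  by rewrite /poly_normally_equiv E !closure_cell // !normal_fan_closed_cell.
have psiE := psi_id psi_sign psi_mono psi_inj psi_surj psi_fan.
apply/seteqP; split => t; first by move=> a_t; rewrite -(psiE _ a_t); exact: psi_sign.
by move=> /psi_surj [s as_ <-]; rewrite psiE.
Qed.

End Converse.

Theorem mainTheorem18 (R : realType) (n m : nat) (u : 'I_m -> 'rV[R]_n)
  (u_nz : forall i, u i != 0)
  (u_nonpar : forall i j : 'I_m, i != j -> ~ (exists c : R, u i = c *: u j))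
  (a b : 'I_m -> R) :
  arr_normally_equiv u a b <-> arr_sign u a = arr_sign u b.
Proof.
split; first exact: sign_of_arr_normally_equiv.
exact: arr_normally_equiv_of_sign.
Qed.
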